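(* Let $S=S_1+S_2$ be the gluing of affine semigroups $S_1,S_2\subset\mathbb N^r$ along $\alpha$. Fix $j\in\{1,2\}$ and $b,b'\in S_j$. Then $b-b'\in S_j$ if and only if $b-b'\in S$.
   Context: $S=S_1+S_2$ is the gluing of $S_1$ and $S_2$ if there is $\alpha\in S_1\cap S_2$ with $\mathbb Z S_1\cap\mathbb Z S_2=\mathbb Z\alpha$, where $\mathbb Z S_j$ is the subgroup of $\mathbb Z^r$ generated by $S_j$. *)

From HB Require Import structures.
From mathcomp Require Import all_boot all_order all_algebra.
Set Implicit Arguments. Unset Strict Implicit. Unset Printing Implicit Defensive.
Import Order.TTheory GRing.Theory Num.Theory.
Local Open Scope ring_scope.

Definition natvec (r : nat) (v : 'rV[int]_r) : Prop := forall i, 0 <= v ord0 i.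

Definition gen_monoid (r : nat) (A : seq 'rV[int]_r) (x : 'rV[int]_r) : Prop :=
  exists c : 'I_(size A) -> nat, x = \sum_(i < size A) A`_i *+ c i.

Definition affine_semigroup (r : nat) (S : 'rV[int]_r -> Prop) : Prop :=
  exists A : seq 'rV[int]_r, (forall a, a \in A -> natvec a) /\
    (forall x, S x <-> gen_monoid A x).

Definition zgroup (r : nat) (S : 'rV[int]_r -> Prop) (x : 'rV[int]_r) : Prop :=
  exists (s : seq 'rV[int]_r) (c : 'I_(size s) -> int),
    (forall y, y \in s -> S y) /\ x = \sum_(i < size s) s`_i *~ c i.

Definition msum (r : nat) (S1 S2 : 'rV[int]_r -> Prop) (x : 'rV[int]_r) : Prop :=
  exists s1 s2, S1 s1 /\ S2 s2 /\ x = s1 + s2.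

Definition gluing (r : nat) (S S1 S2 : 'rV[int]_r -> Prop) (alpha : 'rV[int]_r) : Prop :=
  (forall x, S x <-> msum S1 S2 x) /\ S1 alpha /\ S2 alpha /\
  (forall x, (zgroup S1 x /\ zgroup S2 x) <-> exists k : int, x = alpha *~ k).

(* S_j for j in {1,2}, indexed by 'I_2 (ord0 <-> 1, ord1 <-> 2) *)
Definition pick2 (r : nat) (j : 'I_2) (S1 S2 : 'rV[int]_r -> Prop) : 'rV[int]_r -> Prop :=
  if val j == 0%N then S1 else S2.

From HB Require Import structures.
From mathcomp Require Import all_boot all_order all_algebra.

Set Implicit Arguments.
Unset Strict Implicit.
Unset Printing Implicit Defensive.
Import Order.TTheory GRing.Theory Num.Theory.
Local Open Scope ring_scope.

(* Take j = 1 (the case j = 2 follows by swapping S1 and S2).  If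
   b - b' = s1 + s2 with s_i in S_i, then s2 = (b - (b' + s1)) lies in
   ZS1 and in ZS2, hence s2 = k alpha.  As s2 and alpha lie in N^r, either
   k >= 0 and s2 is a multiple of alpha in S1, or k < 0 and s2 = 0; in both
   cases b - b' = s1 + s2 lies in S1. *)

Section AffineSemigroup.
Variables (r : nat) (S : 'rV[int]_r -> Prop).
Hypothesis affS : affine_semigroup S.

Lemma affine_semigroup0 : S 0.
Proof.
case: affS => A [_ memS]; apply/memS; exists (fun _ => 0%N).
by rewrite big1 // => i _; rewrite mulr0n.
Qed.

Lemma affine_semigroupD x y : S x -> S y -> S (x + y).
Proof.
case: affS => A [_ memS] /memS [cx ->] /memS [cy ->]; apply/memS.
exists (fun i => (cx i + cy i)%N).
by rewrite -big_split; apply: eq_bigr => i _; rewrite mulrnDr.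
Qed.

Lemma affine_semigroupMn x n : S x -> S (x *+ n).
Proof.
move=> Sx; elim: n => [|n IHn]; first by rewrite mulr0n; exact: affine_semigroup0.
by rewrite mulrS; exact: affine_semigroupD.
Qed.

Lemma affine_semigroup_natvec x : S x -> natvec x.
Proof.
case: affS => A [natA memS] /memS [c ->] i.
rewrite summxE; apply: sumr_ge0 => k _; rewrite mulmxnE mulrn_wge0 //.
have [ltkA | leAk] := ltnP k (size A); first exact/natA/mem_nth.
by rewrite nth_default // mxE.
Qed.

Lemma natvec_eq0 (v : 'rV[int]_r) : natvec v -> natvec (- v) -> v = 0.
Proof.
move=> natv natNv; apply/rowP => i; apply/eqP.
have := natNv i; rewrite !mxE eq_le -oppr_ge0 => ->.
by rewrite natv.
Qed.

Lemma affine_semigroup_mulz a k : S a -> natvec (a *~ k) -> S (a *~ k).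
Proof.
move=> Sa; case: k => n; first by rewrite -pmulrn => _; exact: affine_semigroupMn Sa.
rewrite NegzE mulrNz -pmulrn => natNa.
have natna : natvec (a *+ n.+1).
  by move=> i; rewrite mulmxnE mulrn_wge0 // (affine_semigroup_natvec Sa).
rewrite (natvec_eq0 natna natNa) oppr0; exact: affine_semigroup0.
Qed.

End AffineSemigroup.

Section Zgroup.
Variables (r : nat) (S : 'rV[int]_r -> Prop).

Lemma zgroup_mem x : S x -> zgroup S x.
Proof.
move=> Sx; exists [:: x], (fun _ => 1); split; first by move=> y /[1!inE] /eqP ->.
by rewrite big_ord1 mulr1z.
Qed.

Lemma zgroupB x y : S x -> S y -> zgroup S (x - y).
Proof.
move=> Sx Sy; exists [:: x; y], (fun i => [:: 1; -1]`_i).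
split; first by move=> z /[!inE] /orP [] /eqP ->.
by rewrite !big_ord_recl big_ord0 /= addr0 mulr1z mulrN1z.
Qed.

End Zgroup.

Lemma msumC r (S1 S2 : 'rV[int]_r -> Prop) x : msum S1 S2 x -> msum S2 S1 x.
Proof. by case=> s1 [s2 [S1s1 [S2s2 ->]]]; exists s2, s1; rewrite addrC. Qed.

Lemma gluingC r (S S1 S2 : 'rV[int]_r -> Prop) alpha :
  gluing S S1 S2 alpha -> gluing S S2 S1 alpha.
Proof.
case=> memS [S1a [S2a capZ]]; split.
  by move=> x; split=> [/memS/msumC | /msumC/memS].
do 2!split=> //.
by move=> x; split=> [[Z2x Z1x] | /capZ [Z1x Z2x]]; first exact/capZ.
Qed.

Lemma gluing_memBl r (S S1 S2 : 'rV[int]_r -> Prop) alpha b b' :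
  affine_semigroup S1 -> affine_semigroup S2 -> gluing S S1 S2 alpha ->
  S1 b -> S1 b' -> S1 (b - b') <-> S (b - b').
Proof.
move=> aff1 aff2 [memS [S1a [_ capZ]]] S1b S1b'; split=> [S1bb'|].
  apply/memS; exists (b - b'), 0; rewrite addr0; do 2!split=> //.
  exact: affine_semigroup0 aff2.
case/memS=> s1 [s2 [S1s1 [S2s2 def_bb']]].
have [k def_s2] : exists k, s2 = alpha *~ k.
  apply/capZ; split; last exact: zgroup_mem.
  have -> : s2 = b - (b' + s1) by rewrite opprD addrA def_bb' addrAC subrr add0r.
  exact: zgroupB S1b (affine_semigroupD aff1 S1b' S1s1).
have S1s2 : S1 s2.
  have := affine_semigroup_natvec aff2 S2s2.
  by rewrite def_s2; exact: (affine_semigroup_mulz aff1 S1a).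
by rewrite def_bb'; exact: (affine_semigroupD aff1 S1s1 S1s2).
Qed.

Theorem lemma3p5 (r : nat) (S S1 S2 : 'rV[int]_r -> Prop) (alpha : 'rV[int]_r)
  (hS1 : affine_semigroup S1) (hS2 : affine_semigroup S2)
  (hglue : gluing S S1 S2 alpha)
  (j : 'I_2) (b b' : 'rV[int]_r) :
  pick2 j S1 S2 b -> pick2 j S1 S2 b' ->
  (pick2 j S1 S2 (b - b') <-> S (b - b')).
Proof.
rewrite /pick2; case: (val j == 0%N).
  exact: (gluing_memBl hS1 hS2 hglue).
exact: (gluing_memBl hS2 hS1 (gluingC hglue)).
Qed.
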